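(* For all real numbers $a,b$ with $-1\le a<1$ and $0<b<1$, $$\int_0^\infty\frac{\sinh(bt)}{\cosh(t)-a}\,\mathrm{d}t>-\frac{2b}{1+a}\log\Big(\frac12(1-a)\Big).$$ *)

From HB Require Import structures.
From mathcomp Require Import all_boot all_order all_algebra.
From mathcomp Require Import all_classical all_reals all_analysis.
Set Implicit Arguments. Unset Strict Implicit. Unset Printing Implicit Defensive.
Import Order.TTheory GRing.Theory Num.Theory.
Local Open Scope ring_scope.

Definition sinhR {R : realType} (x : R) : R := (expR x - expR (- x)) / 2.
Definition coshR {R : realType} (x : R) : R := (expR x + expR (- x)) / 2.

(* right-hand side  -(2b/(1+a)) log((1-a)/2); at a = -1 (where the formula is
   0/0) it is given its continuous extension, namely b. *)
Definition rhsC1 {R : realType} (a b : R) : R :=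
  if a == -1 then b else - (2 * b / (1 + a)) * ln ((1 - a) / 2).

From HB Require Import structures.
From mathcomp Require Import all_boot all_order all_algebra.
From mathcomp Require Import all_classical all_reals all_analysis.
From mathcomp Require Import measurable_realfun ring lra.
Import numFieldNormedType.Exports.
Import Order.TTheory GRing.Theory Num.Theory.
Local Open Scope classical_set_scope.
Local Open Scope ring_scope.

(* Put f t := sinh (b t) / (cosh t - a).  Since sinh t / (cosh t + 1) = tanh (t / 2)
   <= t / 2 and sinh x >= x + x^3 / 6, the function
     g t := 2 b sinh t / ((cosh t - a) (cosh t + 1))
   satisfies f t - g t >= (b t)^3 / (6 (cosh t - a)) >= 0 on [0, +oo[.  The minorant g
   has the elementary primitive (2 b / (1 + a)) ln ((cosh t - a) / (cosh t + 1)), or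
   -2 b / (cosh t + 1) when a = -1, so its integral is exactly the right-hand side; the
   inequality is strict because f - g is bounded below by a positive constant on [1, 2]. *)

Lemma is_derive_ext {R : numFieldType} {V W : normedModType R} (f g : V -> W)
    (x v : V) (df dg : W) :
  is_derive x v f df -> f =1 g -> df = dg -> is_derive x v g dg.
Proof. by move=> ? /funext <- <-. Qed.

Section real_functions.
Context {R : realType}.
Implicit Types (f g u F : R -> R) (c l : R).

Lemma derivable_continuous f : (forall x, derivable f x 1) -> continuous f.
Proof. by move=> fD x; exact/differentiable_continuous/derivable1_diffP. Qed.

Lemma continuous_divr f g : continuous f -> continuous g -> (forall x, g x != 0) ->
  continuous (fun x => f x / g x).
Proof. by move=> cf cg g_neq0 x; apply: continuousM (cf x) (continuousV (g_neq0 x) (cg x)). Qed.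

Lemma is_derive_ln_comp u x du : 0 < u x -> is_derive x 1 u du ->
  is_derive x 1 (fun y => ln (u y)) (du / u x).
Proof.
move=> ux_gt0 uD.
apply: is_derive_ext (is_derive1_comp (is_derive1_ln ux_gt0) uD) _ _ => //.
by rewrite mulrC.
Qed.

Lemma ger0_is_derive_ndecry {f} {df : R -> R} {c} :
  (forall x : R, is_derive x 1 f (df x)) -> (forall x, c <= x -> 0 <= df x) ->
  forall x y, c <= x -> x <= y -> f x <= f y.
Proof.
move=> fD df_ge0; apply: ger0_derive1_ndecry.
- by [].
- by move=> x; rewrite in_itv/= andbT => /ltW cx; rewrite derive1E derive_val df_ge0.
- by apply/continuous_subspaceT/derivable_continuous.
Qed.

Lemma ge0_is_derive_FTC2y {f F c l} :
  (forall x, c <= x -> 0 <= f x) -> continuous f ->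
  F x @[x --> +oo] --> l -> (forall x : R, is_derive x 1 F (f x)) ->
  (\int[lebesgue_measure]_(x in `[c, +oo[) (f x)%:E = l%:E - (F c)%:E)%E.
Proof.
move=> f_ge0 cf Fl FD; apply: ge0_continuous_FTC2y => //.
- exact: continuous_subspaceT.
- by apply/cvg_at_right_filter/derivable_continuous.
- by move=> x _; rewrite derive1E derive_val.
Qed.

Lemma continuous_measurable_funS (D : set R) f :
  measurable D -> continuous f -> measurable_fun D f.
Proof. by move=> mD /continuous_measurable_fun; apply: measurable_funS. Qed.

End real_functions.

Lemma integralZl_indic_subset d (T : measurableType d) (R : realType)
    (mu : {measure set T -> \bar R}) (D A : set T) (c : R) :
  measurable D -> measurable A -> A `<=` D -> 0 <= c ->
  (\int[mu]_(x in D) (c * \1_A x)%:E = c%:E * mu A)%E.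
Proof.
move=> mD mA AD c_ge0.
rewrite (@integralZl_indic _ _ _ mu D mD (fun=> A)) //; last by rewrite ltNge c_ge0.
by rewrite integral_indic // setIidl.
Qed.

Section hyperbolic.
Context {R : realType}.
Implicit Types x y : R.

Global Instance is_derive_sinhR x : is_derive x 1 sinhR (coshR x).
Proof. by rewrite /sinhR; apply: is_derive_eq; rewrite /coshR /GRing.scale /=; field. Qed.

Global Instance is_derive_coshR x : is_derive x 1 coshR (sinhR x).
Proof. by rewrite /coshR; apply: is_derive_eq; rewrite /sinhR /GRing.scale /=; field. Qed.

Lemma sinhR0 : sinhR 0 = 0 :> R.
Proof. by rewrite /sinhR oppr0 subrr mul0r. Qed.

Lemma coshR0 : coshR 0 = 1 :> R.
Proof. by rewrite /coshR oppr0 expR0 -[1 + 1]/2 divff. Qed.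

Lemma coshR_ge1 x : 1 <= coshR x.
Proof. by rewrite /coshR; have := expR_ge1Dx x; have := expR_ge1Dx (- x); lra. Qed.

Lemma coshR_le_expR x : 0 <= x -> coshR x <= expR x.
Proof.
move=> x_ge0; have : expR (- x) <= expR x by rewrite ler_expR; lra.
rewrite /coshR; lra.
Qed.

Lemma sinhR_ge_id x : 0 <= x -> x <= sinhR x.
Proof.
move=> x_ge0.
have dp_ge0 y : 0 <= y -> 0 <= coshR y - 1 by rewrite subr_ge0 coshR_ge1.
have pD y : is_derive y 1 (fun z => sinhR z - z) (coshR y - 1) by apply: is_derive_eq.
by have := ger0_is_derive_ndecry pD dp_ge0 _ _ (lexx 0) x_ge0; rewrite sinhR0 subr0 subr_ge0.
Qed.

Lemma coshR_ge_sqr x : 0 <= x -> 1 + x ^+ 2 / 2 <= coshR x.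
Proof.
move=> x_ge0.
have dp_ge0 y : 0 <= y -> 0 <= sinhR y - y by rewrite subr_ge0 => /sinhR_ge_id.
have pD y : is_derive y 1 (fun z => coshR z - 1 - z ^+ 2 / 2) (sinhR y - y).
  by apply: is_derive_eq; rewrite /GRing.scale /=; field.
have := ger0_is_derive_ndecry pD dp_ge0 _ _ (lexx 0) x_ge0.
rewrite coshR0 expr0n /=; lra.
Qed.

Lemma sinhR_ge_cube x : 0 <= x -> x + x ^+ 3 / 6 <= sinhR x.
Proof.
move=> x_ge0.
have dp_ge0 y : 0 <= y -> 0 <= coshR y - 1 - y ^+ 2 / 2 by move/coshR_ge_sqr; lra.
have pD y : is_derive y 1 (fun z => sinhR z - z - z ^+ 3 / 6) (coshR y - 1 - y ^+ 2 / 2).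
  by apply: is_derive_eq; rewrite /GRing.scale /=; field.
have := ger0_is_derive_ndecry pD dp_ge0 _ _ (lexx 0) x_ge0.
rewrite sinhR0 expr0n /=; lra.
Qed.

Lemma coshR_le_mul_sinhR x : 0 <= x -> coshR x <= 1 + x * sinhR x.
Proof.
move=> x_ge0.
have dp_ge0 y : 0 <= y -> 0 <= y * coshR y.
  by move=> y_ge0; rewrite mulr_ge0 // (le_trans ler01 (coshR_ge1 y)).
have pD y : is_derive y 1 (fun z => 1 - coshR z + z * sinhR z) (y * coshR y).
  by apply: is_derive_eq; rewrite /GRing.scale /=; field.
have := ger0_is_derive_ndecry pD dp_ge0 _ _ (lexx 0) x_ge0.
rewrite coshR0 mul0r; lra.
Qed.

Lemma sinhR_div_coshRD1_le x : 0 <= x -> sinhR x / (coshR x + 1) <= x / 2.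
Proof.
move=> x_ge0.
have dp_ge0 y : 0 <= y -> 0 <= 1 - coshR y + y * sinhR y by move/coshR_le_mul_sinhR; lra.
have pD y : is_derive y 1 (fun z => z * (coshR z + 1) - 2 * sinhR z)
    (1 - coshR y + y * sinhR y).
  by apply: is_derive_eq; rewrite /GRing.scale /=; field.
have := ger0_is_derive_ndecry pD dp_ge0 _ _ (lexx 0) x_ge0.
rewrite sinhR0 mul0r mulr0 subr0 => p_ge0.
by rewrite ler_pdivrMr; have := coshR_ge1 x; lra.
Qed.

Lemma coshR_ge_id x : x <= coshR x.
Proof.
have [x_le0|x_gt0] := leP x 0; first by have := coshR_ge1 x; lra.
have := coshR_ge_sqr x (ltW x_gt0); have := sqr_ge0 (x - 1); nra.
Qed.

Lemma inv_coshRD1_cvg0 : (coshR x + 1)^-1 @[x --> +oo] --> (0 : R).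
Proof.
apply/gtr0_cvgV0; first by apply: nearW => x; have := coshR_ge1 x; lra.
apply: (ger_cvgy (f := id)); last exact: cvg_id.
by apply: nearW => x; have := coshR_ge_id x; lra.
Qed.

End hyperbolic.

Section minorant.
Context {R : realType}.
Implicit Types a b t : R.

Definition minorant a b t := 2 * b * sinhR t / ((coshR t - a) * (coshR t + 1)).

Lemma coshR_subr_gt0 {a} t : a < 1 -> 0 < coshR t - a.
Proof. by move=> a_lt1; have := coshR_ge1 t; lra. Qed.

Lemma coshRD1_gt0 t : 0 < coshR t + 1.
Proof. by have := coshR_ge1 t; lra. Qed.

Lemma minorant_ge0 a b t : a < 1 -> 0 <= b -> 0 <= t -> 0 <= minorant a b t.
Proof.
move=> a_lt1 b_ge0 t_ge0; apply: divr_ge0.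
  by apply: mulr_ge0; [exact: mulr_ge0 | exact: le_trans t_ge0 (sinhR_ge_id t t_ge0)].
by apply: mulr_ge0; apply: ltW; [exact: coshR_subr_gt0 | exact: coshRD1_gt0].
Qed.

Lemma continuous_minorant a b : a < 1 -> continuous (minorant a b).
Proof.
move=> a_lt1; apply: continuous_divr => [x|x|x].
- exact: derivable_continuous.
- exact: derivable_continuous.
- by rewrite mulf_neq0 // gt_eqF ?coshR_subr_gt0 ?coshRD1_gt0.
Qed.

Lemma integral_minorant_gtN1 a b : -1 < a -> a < 1 -> 0 <= b ->
  (\int[lebesgue_measure]_(t in `[0%R, +oo[) (minorant a b t)%:E =
    (- (2 * b / (1 + a)) * ln ((1 - a) / 2))%:E)%E.
Proof.
move=> a_gtN1 a_lt1 b_ge0.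
have a1_neq0 : 1 + a != 0 by rewrite gt_eqF //; lra.
pose F t := 2 * b / (1 + a) * ln (1 - (1 + a) / (coshR t + 1)).
have FE t : F t = 2 * b / (1 + a) * (ln (coshR t - a) - ln (coshR t + 1)).
  have := coshR_subr_gt0 t a_lt1; have := coshRD1_gt0 t => pos1 pos2.
  by rewrite -ln_div ?posrE // /F; congr (_ * ln _); field; rewrite gt_eqF.
have FD t : is_derive t 1 F (minorant a b t).
  have := coshR_subr_gt0 t a_lt1; have := coshRD1_gt0 t => pos1 pos2.
  have lnD1 : is_derive t 1 (fun y => ln (coshR y - a)) (sinhR t / (coshR t - a)).
    by apply: is_derive_ln_comp => //; apply: is_derive_eq; rewrite subr0.
  have lnD2 : is_derive t 1 (fun y => ln (coshR y + 1)) (sinhR t / (coshR t + 1)).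
    by apply: is_derive_ln_comp => //; apply: is_derive_eq; rewrite addr0.
  apply: is_derive_ext (is_deriveZ (2 * b / (1 + a)) (is_deriveB lnD1 lnD2)) _ _.
    by move=> y; rewrite FE.
  by rewrite /minorant /GRing.scale /=; field; rewrite a1_neq0 !gt_eqF.
have F_cvg0 : F t @[t --> +oo] --> (0 : R).
  have inner : 1 - (1 + a) / (coshR t + 1) @[t --> +oo] --> (1 : R).
    rewrite -[X in _ --> X]subr0 -(mulr0 (1 + a)).
    exact: cvgB (cvg_cst _) (cvgMl_tmp inv_coshRD1_cvg0).
  rewrite -(mulr0 (2 * b / (1 + a))) -ln1; apply: cvgMl_tmp.
  exact: continuous_cvg (continuous_ln ltr01) inner.
rewrite (ge0_is_derive_FTC2y (fun t => minorant_ge0 a b t a_lt1 b_ge0)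
  (continuous_minorant a b a_lt1) F_cvg0 FD).
by rewrite /F coshR0 -EFinB add0r -mulNr; congr (_ * ln _)%:E; field.
Qed.

Lemma integral_minorantN1 b : 0 <= b ->
  (\int[lebesgue_measure]_(t in `[0%R, +oo[) (minorant (-1) b t)%:E = b%:E)%E.
Proof.
move=> b_ge0.
have N1_lt1 : -1 < 1 :> R by lra.
pose F t := - (2 * b) * (coshR t + 1)^-1.
have FD t : is_derive t 1 F (minorant (-1) b t).
  have cD : is_derive t 1 (fun y => coshR y + 1) (sinhR t).
    by apply: is_derive_eq; rewrite addr0.
  have VD := is_deriveV (f := fun y => coshR y + 1) (lt0r_neq0 (coshRD1_gt0 t)) cD.
  apply: is_derive_ext (is_deriveZ (- (2 * b)) VD) _ _.
    by move=> y.
  by rewrite /minorant /GRing.scale /=; field; rewrite gt_eqF ?coshRD1_gt0.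
have F_cvg0 : F t @[t --> +oo] --> (0 : R).
  by rewrite -(mulr0 (- (2 * b))); exact: cvgMl_tmp inv_coshRD1_cvg0.
rewrite (ge0_is_derive_FTC2y (fun t => minorant_ge0 (-1) b t N1_lt1 b_ge0)
  (continuous_minorant (-1) b N1_lt1) F_cvg0 FD).
by rewrite /F coshR0 -EFinB; congr EFin; field.
Qed.

Lemma integral_minorant a b : -1 <= a -> a < 1 -> 0 <= b ->
  (\int[lebesgue_measure]_(t in `[0%R, +oo[) (minorant a b t)%:E = (rhsC1 a b)%:E)%E.
Proof.
rewrite le_eqVlt => /predU1P[<-|a_gtN1] a_lt1 b_ge0; rewrite /rhsC1.
  by rewrite eqxx integral_minorantN1.
by rewrite gt_eqF // integral_minorant_gtN1.
Qed.

Lemma minorant_gap a b t : a < 1 -> 0 <= b -> 0 <= t ->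
  minorant a b t + (b * t) ^+ 3 / 6 / (coshR t - a) <= sinhR (b * t) / (coshR t - a).
Proof.
move=> a_lt1 b_ge0 t_ge0.
have tanh_le := ler_wpM2l b_ge0 (sinhR_div_coshRD1_le t t_ge0).
have cube_le := sinhR_ge_cube (b * t) (mulr_ge0 b_ge0 t_ge0).
have -> : minorant a b t = 2 * b * (sinhR t / (coshR t + 1)) / (coshR t - a).
  by rewrite /minorant; field; rewrite !gt_eqF ?coshRD1_gt0 ?coshR_subr_gt0.
rewrite -mulrDl ler_pM2r ?invr_gt0 ?coshR_subr_gt0 //; lra.
Qed.

(* On [[1, 2]], [(b t)^3 >= b^3] and [cosh t - a <= e^2 + 1]. *)
Definition bump_height b := b ^+ 3 / 6 / (expR 2 + 1).

Lemma bump_height_gt0 b : 0 < b -> 0 < bump_height b.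
Proof. by move=> b_gt0; rewrite !divr_gt0 ?exprn_gt0 // addr_gt0 ?expR_gt0. Qed.

Lemma minorant_bump_le a b t : -1 <= a -> a < 1 -> 0 <= b -> 0 <= t ->
  minorant a b t + bump_height b * \1_`[1, 2] t <= sinhR (b * t) / (coshR t - a).
Proof.
move=> a_geN1 a_lt1 b_ge0 t_ge0.
apply: le_trans (minorant_gap a b t a_lt1 b_ge0 t_ge0); rewrite lerD2l indicE.
have den_gt0 := coshR_subr_gt0 t a_lt1.
have [t_in|_] := boolP (t \in `[1, 2]%classic); last first.
  by rewrite mulr0 !divr_ge0 ?exprn_ge0 ?mulr_ge0 // ltW.
move: t_in; rewrite mulr1 inE /= in_itv /= => /andP[t_ge1 t_le2].
have cube_ge : b ^+ 3 / 6 <= (b * t) ^+ 3 / 6.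
  by rewrite ler_pM2r // exprMn ler_peMr ?exprn_ge0 // exprn_ege1.
have den_le : coshR t - a <= expR 2 + 1.
  have := coshR_le_expR t t_ge0; have : expR t <= expR 2 by rewrite ler_expR.
  lra.
apply: ler_pM => //; first by rewrite divr_ge0 ?exprn_ge0.
by rewrite lef_pV2 ?posrE // addr_gt0 ?expR_gt0.
Qed.

Lemma integral_minorant_bump a b : -1 <= a -> a < 1 -> 0 < b ->
  (\int[lebesgue_measure]_(t in `[0%R, +oo[)
      (minorant a b t + bump_height b * \1_`[1, 2] t)%:E
   = (rhsC1 a b + bump_height b)%:E)%E.
Proof.
move=> a_geN1 a_lt1 b_gt0.
have b_ge0 := ltW b_gt0; have bump_ge0 := ltW (bump_height_gt0 b b_gt0).
have itv12_sub : `[1, 2] `<=` (`[0, +oo[ : set R).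
  by move=> x /=; rewrite !in_itv /= => /andP[x_ge1 _]; rewrite (le_trans ler01).
have itv12_len : (@lebesgue_measure R `[1%R, 2%R]%classic = 1%:E)%E.
  by rewrite lebesgue_measure_itv /= lte_fin ltr1n -EFinB; congr EFin; lra.
under eq_integral do rewrite EFinD.
rewrite ge0_integralD //.
- rewrite integral_minorant // integralZl_indic_subset // EFinD; congr (_ + _)%E.
  by rewrite -[RHS]mule1; congr (_ * _)%E; exact: itv12_len.
- by move=> t /=; rewrite in_itv /= andbT lee_fin => /(minorant_ge0 a b t a_lt1 b_ge0).
- apply/measurable_EFinP; apply: continuous_measurable_funS => //.
  exact: continuous_minorant.
- by move=> t _; rewrite lee_fin mulr_ge0 // indicE.
- by apply/measurable_EFinP; apply: measurable_funM => //; exact: measurable_indic.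
Qed.

End minorant.

Theorem lemmaC1 (R : realType) (a b : R) :
  -1 <= a -> a < 1 -> 0 < b -> b < 1 ->
  ((rhsC1 a b)%:E <
   \int[@lebesgue_measure R]_(t in `[0%R, +oo[%classic)
      (sinhR (b * t) / (coshR t - a))%:E)%E.
Proof.
move=> a_geN1 a_lt1 b_gt0 _.
have b_ge0 := ltW b_gt0.
apply: (@lt_le_trans _ _ (rhsC1 a b + bump_height b)%:E).
  by rewrite lte_fin ltrDl bump_height_gt0.
rewrite -integral_minorant_bump //; apply: ge0_le_integral => //.
- move=> t /=; rewrite in_itv /= andbT lee_fin => t_ge0.
  by rewrite addr_ge0 ?minorant_ge0 // mulr_ge0 ?indicE // ltW ?bump_height_gt0.
- apply/measurable_EFinP; apply: measurable_funD.
    by apply: continuous_measurable_funS => //; exact: continuous_minorant.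
  by apply: measurable_funM => //; exact: measurable_indic.
- apply/measurable_EFinP; apply: continuous_measurable_funS => //.
  apply: continuous_divr => [x|x|x]; try exact: derivable_continuous.
  by rewrite gt_eqF ?coshR_subr_gt0.
- move=> t /=; rewrite in_itv /= andbT lee_fin => t_ge0.
  exact: minorant_bump_le.
Qed.
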